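(* Let $r\ge1$ and $\alpha,\beta,\gamma^1,\dots,\gamma^r\in\mathrm{ord}$. 1. If $\alpha\le\beta$ and $\beta<\alpha,\gamma^1,\dots,\gamma^r$, then $\beta<\gamma^1,\dots,\gamma^r$. 2. If $\beta<\alpha$ and $\alpha\le\beta,\gamma^1,\dots,\gamma^r$, then $\alpha\le\gamma^1,\dots,\gamma^r$.
   Context: Work constructively. Let $\mathfrak F$ be a set of index sets containing $\mathbb N$ and each $\mathbb N_k=\{n\in\mathbb N:n<k\}$ ($k\ge0$), closed (up to isomorphism) under finitely enumerated subsets, sets of finitely enumerated subsets, and disjoint unions indexed by elements of $\mathfrak F$. A finitely enumerated subset of $A$ is one given by a map $\mathbb N_k\to A$; write $F\subseteq_f I$. The set $\mathrm{ord}$ is inductively generated by $\underline 0$ and, for every family $(\alpha_i)_{i\in I}$ with $I\in\mathfrak F$, $\alpha_i\in\mathrm{ord}$, an element $\mathrm S(\alpha_i)_{i\in I}$; for such $\alpha$, $I_\alpha=I$ and $\alpha_i$ are its definitional subordinals; $I_{\underline 0}=\emptyset$. For a finite list $F$ in $I_\alpha$, $\alpha_F$ is the list of the $\alpha_i$, $i\in F$. Relations between an element and a nonempty finite list, by simultaneous induction: $\alpha\le\beta^1,\dots,\beta^m$ means $\alpha_i<\beta^1,\dots,\beta^m$ for all $i\in I_\alpha$; $\alpha<\beta^1,\dots,\beta^m$ means there exist $F_1\subseteq_f I_{\beta^1},\dots,F_m\subseteq_f I_{\beta^m}$, not all empty, with $\alpha\le\beta^1_{F_1},\dots,\beta^m_{F_m}$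 (concatenated list); $\alpha\le\beta$, $\alpha<\beta$ are the case $m=1$. *)

From Stdlib Require Import List.
Import ListNotations.
Set Implicit Arguments.

Definition Iso (A B : Type) : Prop :=
  exists (f : A -> B) (g : B -> A),
    (forall a, g (f a) = a) /\ (forall b, f (g b) = b).

Definition Nk (k : nat) : Type := {n : nat | n < k}.

(* A family of index sets 𝔉, given as codes [code] with decoding [El],
   together with the closure properties of the paper (up to isomorphism). *)
Record IndexFamily := {
  code : Type;
  El : code -> Type;
  has_nat : exists c, Iso (El c) nat;
  has_Nk : forall k, exists c, Iso (El c) (Nk k);
  (* every finitely enumerated subset F ⊆_f I (the image of a map N_k -> I)
     is (up to iso) in the family *)
  clos_fsub : forall c k (f : Nk k -> El c),
      exists c', Iso (El c') {x : El c | exists j, f j = x};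
  (* the set of finitely enumerated subsets of I (maps N_k -> I) *)
  clos_fsubs : forall c, exists c', Iso (El c') {k : nat & Nk k -> El c};
  clos_sigma : forall c (d : El c -> code),
      exists c', Iso (El c') {i : El c & El (d i)}
}.

Section Ord.
Variable F : IndexFamily.

Inductive ord : Type :=
| ozero : ord
| oS : forall c : code F, (El F c -> ord) -> ord.

Definition idx (a : ord) : Type :=
  match a with ozero => Empty_set | oS c _ => El F c end.

Definition sub (a : ord) : idx a -> ord :=
  match a return idx a -> ord with
  | ozero => fun e => match e with end
  | oS _ f => f
  end.

(* A choice of finitely enumerated subsets F_1 ⊆_f I_{b^1}, ..., F_m ⊆_f I_{b^m};
   a finitely enumerated subset N_k -> I is represented by a list of length k. *)
Fixpoint sel (L : list ord) : Type :=
  match L with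
  | [] => unit
  | b :: L' => (list (idx b) * sel L')%type
  end.

Fixpoint pick (L : list ord) : sel L -> list ord :=
  match L return sel L -> list ord with
  | [] => fun _ => []
  | b :: L' => fun p => map (sub b) (fst p) ++ pick L' (snd p)
  end.

Fixpoint sel_ne (L : list ord) : sel L -> Prop :=
  match L return sel L -> Prop with
  | [] => fun _ => False
  | b :: L' => fun p => fst p <> [] \/ sel_ne L' (snd p)
  end.

(* alpha <= b^1,...,b^m  :<->  for all i in I_alpha, alpha_i < b^1,...,b^m,
   where gamma < b^1..b^m :<-> exists F_j ⊆_f I_{b^j}, not all empty,
   with gamma <= b^1_{F_1},...,b^m_{F_m}.  (Simultaneous recursion, unfolded.) *)
Fixpoint ole (a : ord) (L : list ord) : Prop :=
  match a with
  | ozero => True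
  | oS c f => forall i : El F c,
      exists s : sel L, sel_ne L s /\ ole (f i) (pick L s)
  end.

Definition olt (a : ord) (L : list ord) : Prop :=
  exists s : sel L, sel_ne L s /\ ole a (pick L s).

Lemma ole_unfold (a : ord) (L : list ord) :
  ole a L <-> forall i : idx a, olt (sub a i) L.
Proof. destruct a; simpl; [split; [intros _ []|auto] | reflexivity]. Qed.

End Ord.

(* Transitivity: if a <= L and every member of L
   is <= N, then a <= N (and likewise for <), by induction on a, collecting
   the finitely many selections from N into one. Cancellation: b < b,gs
   implies b < gs, by induction on b: a witnessing selection takes some
   subordinals b_i from b itself, and each of them is removed in turn, since
   b_i < b_i,rest gives b_i < rest by the induction hypothesis. Both parts of
   the theorem then follow by transitivity and cancellation, constructively. *)
From Stdlib Require Import List.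
Import ListNotations.
Set Implicit Arguments.
Unset Strict Implicit.

Section OrdLists.
Variable F : IndexFamily.

Definition subordinal (L : list (ord F)) (m : ord F) : Prop :=
  exists b, In b L /\ exists i : idx b, sub b i = m.

Fixpoint sel_nil (L : list (ord F)) : sel L :=
  match L return sel L with
  | [] => tt
  | b :: L' => ([], sel_nil L')
  end.

Fixpoint sel_union (L : list (ord F)) : sel L -> sel L -> sel L :=
  match L return sel L -> sel L -> sel L with
  | [] => fun _ _ => tt
  | b :: L' => fun s1 s2 => (fst s1 ++ fst s2, sel_union (snd s1) (snd s2))
  end.

Lemma in_pick_union (L : list (ord F)) (s1 s2 : sel L) (m : ord F) :
  In m (pick L (sel_union s1 s2)) <-> In m (pick L s1) \/ In m (pick L s2).
Proof.
  induction L as [|b L IH]; simpl; [tauto|].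
  rewrite map_app, !in_app_iff, IH; tauto.
Qed.

Lemma sel_ne_pick (L : list (ord F)) (s : sel L) : sel_ne L s <-> pick L s <> [].
Proof.
  induction L as [|b L IH]; simpl; [split; [tauto|congruence]|].
  rewrite IH; destruct s as [[|i I] s]; simpl.
  - split; [intros [H|H]; [congruence|exact H]|auto].
  - split; [discriminate|intros _; left; discriminate].
Qed.

Lemma sel_ne_incl (L L' : list (ord F)) (s : sel L) (s' : sel L') :
  incl (pick L s) (pick L' s') -> sel_ne L s -> sel_ne L' s'.
Proof.
  rewrite !sel_ne_pick; intros Hincl Hne E.
  destruct (pick L s) as [|m M]; [congruence|].
  rewrite E in Hincl; exact (Hincl m (or_introl eq_refl)).
Qed.

Lemma subordinal_pick (L : list (ord F)) (s : sel L) (m : ord F) :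
  In m (pick L s) -> subordinal L m.
Proof.
  induction L as [|b L IH]; simpl; [tauto|].
  rewrite in_app_iff, in_map_iff; intros [[i [Hi _]]|Hm].
  - exists b; split; [left|exists i]; auto.
  - destruct (IH _ Hm) as [b' [Hb' Hi]]; exists b'; split; [right|]; auto.
Qed.

Lemma pick_single (L : list (ord F)) (b : ord F) (i : idx b) :
  In b L -> exists s : sel L, In (sub b i) (pick L s).
Proof.
  induction L as [|a L IH]; simpl; [tauto|].
  intros [<-|Hb].
  - exists ([i], sel_nil L); simpl; auto.
  - destruct (IH Hb) as [s Hs]; exists ([], s); exact Hs.
Qed.

Lemma sel_cover (L M : list (ord F)) :
  (forall m, In m M -> subordinal L m) -> exists s : sel L, incl M (pick L s).
Proof.
  induction M as [|m M IH]; intros HM.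
  - exists (sel_nil L); intros z [].
  - destruct IH as [s Hs]; [intros; apply HM; right; assumption|].
    destruct (HM m (or_introl eq_refl)) as [b [Hb [i <-]]].
    destruct (pick_single i Hb) as [s1 Hs1].
    exists (sel_union s1 s); intros z [<-|Hz]; apply in_pick_union; auto.
Qed.

Lemma sel_incl (L L' : list (ord F)) (s : sel L) :
  incl L L' -> exists s' : sel L', incl (pick L s) (pick L' s').
Proof.
  intros Hincl; apply sel_cover; intros m Hm.
  destruct (subordinal_pick Hm) as [b [Hb Hi]]; exists b; auto.
Qed.

Lemma ole_incl (a : ord F) (L L' : list (ord F)) :
  ole a L -> incl L L' -> ole a L'.
Proof.
  revert L L'; induction a as [|c f IH]; simpl; auto.
  intros L L' Ha Hincl i; destruct (Ha i) as [s [Hne Hfi]].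
  destruct (sel_incl s Hincl) as [s' Hs'].
  exists s'; split; [exact (sel_ne_incl Hs' Hne)|exact (IH i _ _ Hfi Hs')].
Qed.

Lemma ole_refl (a : ord F) (L : list (ord F)) : In a L -> ole a L.
Proof.
  revert L; induction a as [|c f IH]; simpl; auto.
  intros L Ha i; destruct (@pick_single L (oS c f) i Ha) as [s Hs].
  exists s; split; [|exact (IH i _ Hs)].
  apply sel_ne_pick; intros E; rewrite E in Hs; exact Hs.
Qed.

Lemma olt_ole (a : ord F) (L : list (ord F)) : olt a L -> ole a L.
Proof.
  revert L; induction a as [|c f IH]; simpl; auto.
  intros L [s [Hne Ha]] i; exists s; split; [exact Hne|].
  apply IH; exact (Ha i).
Qed.

Lemma olt_all (P N : list (ord F)) :
  P <> [] -> (forall p, In p P -> olt p N) ->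
  exists s : sel N, sel_ne N s /\ forall p, In p P -> ole p (pick N s).
Proof.
  induction P as [|p P IH]; intros HP Hlt; [congruence|].
  destruct (Hlt p (or_introl eq_refl)) as [s1 [Hne1 Hp]].
  destruct P as [|p' P].
  { exists s1; split; [exact Hne1|]; intros q [<-|[]]; exact Hp. }
  destruct IH as [s2 [_ HP2]]; [discriminate|intros; apply Hlt; right; assumption|].
  assert (Hincl1 : incl (pick N s1) (pick N (sel_union s1 s2))).
  { intros m Hm; apply in_pick_union; auto. }
  assert (Hincl2 : incl (pick N s2) (pick N (sel_union s1 s2))).
  { intros m Hm; apply in_pick_union; auto. }
  exists (sel_union s1 s2); split; [exact (sel_ne_incl Hincl1 Hne1)|].
  intros q [<-|Hq]; eapply ole_incl; eauto.
Qed.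

Lemma pick_dominated (L N : list (ord F)) (s : sel L) :
  sel_ne L s -> (forall y, In y L -> ole y N) ->
  exists s' : sel N, sel_ne N s' /\ forall p, In p (pick L s) -> ole p (pick N s').
Proof.
  intros Hne HLN; apply olt_all; [apply sel_ne_pick; exact Hne|].
  intros p Hp; destruct (subordinal_pick Hp) as [y [Hy [j <-]]].
  exact (proj1 (ole_unfold y N) (HLN y Hy) j).
Qed.

Lemma ole_trans (a : ord F) (L N : list (ord F)) :
  ole a L -> (forall y, In y L -> ole y N) -> ole a N.
Proof.
  revert L N; induction a as [|c f IH]; simpl; auto.
  intros L N Ha HLN i; destruct (Ha i) as [s [Hne Hfi]].
  destruct (pick_dominated Hne HLN) as [s' [Hne' Hs']].
  exists s'; split; [exact Hne'|exact (IH i _ _ Hfi Hs')].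
Qed.

Lemma olt_trans (a : ord F) (L N : list (ord F)) :
  olt a L -> (forall y, In y L -> ole y N) -> olt a N.
Proof.
  intros [s [Hne Ha]] HLN.
  destruct (pick_dominated Hne HLN) as [s' [Hne' Hs']].
  exists s'; split; [exact Hne'|exact (ole_trans Ha Hs')].
Qed.

Lemma olt_nonempty (a : ord F) (L : list (ord F)) : olt a L -> L <> [].
Proof. intros [s [Hne _]] ->; exact Hne. Qed.

Lemma olt_drop_head (a p : ord F) (R : list (ord F)) :
  ole p R -> olt a (p :: R) -> olt a R.
Proof.
  intros Hp Ha; apply (olt_trans Ha).
  intros y [<-|Hy]; [exact Hp|exact (ole_refl Hy)].
Qed.

Lemma olt_drop_subordinals (b : ord F) (G : list (ord F)) :
  (forall j gs, olt (sub b j) (sub b j :: gs) -> olt (sub b j) gs) ->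
  forall I : list (idx b),
    (forall j, olt (sub b j) (map (sub b) I ++ G)) -> forall j, olt (sub b j) G.
Proof.
  intros IH I; induction I as [|i I IHI]; simpl; [auto|].
  intros Hlt; apply IHI; intros j.
  apply (olt_drop_head (p := sub b i)); [|exact (Hlt j)].
  apply olt_ole, IH, Hlt.
Qed.

Lemma olt_cons_self (b : ord F) (gs : list (ord F)) :
  olt b (b :: gs) -> olt b gs.
Proof.
  revert gs; induction b as [|c f IH]; intros gs [[I s] [Hne Hb]]; simpl in Hne.
  - destruct I as [|[] I]; destruct Hne as [Hne|Hne]; [contradiction|].
    exists s; split; [exact Hne|exact Logic.I].
  - assert (HG : forall j, olt (f j) (pick gs s)).
    { apply (@olt_drop_subordinals (oS c f) _ IH I), Hb. }
    exists s; split; [|exact HG].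
    destruct Hne as [HI|Hne]; [|exact Hne].
    destruct I as [|i I]; [contradiction|].
    apply sel_ne_pick, (olt_nonempty (HG i)).
Qed.

End OrdLists.

Theorem lemma4p12 (F : IndexFamily) (alpha beta : ord F) (gammas : list (ord F))
  (hr : gammas <> []) :
  (ole alpha [beta] -> olt beta (alpha :: gammas) -> olt beta gammas) /\
  (olt beta [alpha] -> ole alpha (beta :: gammas) -> ole alpha gammas).
Proof.
  split; intros H1 H2.
  - apply olt_cons_self, (olt_trans H2).
    intros y [<-|Hy].
    + apply (ole_incl H1); intros z [<-|[]]; left; reflexivity.
    + apply ole_refl; right; exact Hy.
  - assert (Hbeta : ole beta gammas).
    { apply olt_ole, olt_cons_self, (olt_trans H1).
      intros y [<-|[]]; exact H2. }
    apply (ole_trans H2); intros y [<-|Hy]; [exact Hbeta|exact (ole_refl Hy)].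
Qed.
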